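(* Let $0\le r\le n$ be integers and let $\alpha,\beta$ be indeterminates. Then \[\sum_{A\in\mathcal{A}_{n+1,r+1}} \alpha^{-|\mathrm{lrs}(A)|}\,\beta^{-|\mathrm{rls}(A)|} \;=\; \binom{n}{r}\prod_{i=r}^{n-1}\left(\alpha^{-1}+\beta^{-1}+i\right).\]
   Context: An assemblée of size $(m,s)$ is a collection of $s$ nonempty, pairwise disjoint, linearly ordered sets (blocks) whose union is $\{1,\dots,m\}$; the last element of a block is its block-end. The blocks are always listed in the canonical order in which the block-ends decrease from left to right, and the assemblée is identified with the word of length $m$ obtained by concatenating its blocks in this order (''left/right in $A$'' refers to this word). $\mathcal{A}_{m,s}$ denotes the set of assemblées of size $(m,s)$. For $A\in\mathcal{A}_{n+1,r+1}$ let $b_1>b_2>\dots>b_{r+1}$ be its block-ends. Then $\mathrm{lrs}(A)$ is the set of elements $x$ of $A$ with $x>b_1$ such that $x$ is larger than every element $y>b_1$ appearing to the right of $x$ in $A$; and $\mathrm{rls}(A)$ is the set of elements $x$ of $A$ with $x<b_{r+1}$ such that $x$ is larger than every element $y<b_{r+1}$ appearing to the left of $x$ in $A$. (Example: for $A=[2,10,12,7]\,[5,9,1,8,6]\,[3,11,4]$, $\mathrm{lrs}(A)=\{12,11\}$ and $\mathrm{rls}(A)=\{3,2\}$.) *)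

From mathcomp Require Import all_boot all_order all_algebra.
Set Implicit Arguments. Unset Strict Implicit. Unset Printing Implicit Defensive.
Import GRing.Theory.

(* An assemblee of size (m,s) is represented by the list of its blocks
   (each block a list of naturals, i.e. a linearly ordered set), listed in
   the canonical order: block-ends strictly decreasing from left to right. *)

Definition block_ends (A : seq (seq nat)) : seq nat := map (last 0) A.

Definition is_assemblee (m s : nat) (A : seq (seq nat)) : bool :=
  [&& size A == s,
      all (fun B => size B != 0) A,
      perm_eq (flatten A) (iota 1 m)
    & sorted (fun x y => y < x) (block_ends A)].

(* Finite list of candidates covering all assemblees of size (m,s):
   every assemblee A equals reshape (map size A) (flatten A), where
   flatten A is a permutation of 1..m and all block sizes are <= m. *)
Fixpoint all_lists (k : nat) (xs : seq nat) : seq (seq nat) :=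
  if k is k'.+1 then [seq x :: l | x <- xs, l <- all_lists k' xs]
  else [:: [::]].

Definition assemblee_candidates (m s : nat) : seq (seq (seq nat)) :=
  [seq reshape sh w
     | w <- permutations (iota 1 m), sh <- all_lists s (iota 0 m.+1)].

Definition assemblees (m s : nat) : seq (seq (seq nat)) :=
  undup [seq A <- assemblee_candidates m s | is_assemblee m s A].

Definition lrs (A : seq (seq nat)) : seq nat :=
  let w := flatten A in
  let b1 := head 0 (block_ends A) in
  [seq nth 0 w i | i <- iota 0 (size w) &
     (b1 < nth 0 w i) &&
     all (fun y => (b1 < y) ==> (y < nth 0 w i)) (drop i.+1 w)].

Definition rls (A : seq (seq nat)) : seq nat :=
  let w := flatten A in
  let bl := last 0 (block_ends A) in
  [seq nth 0 w i | i <- iota 0 (size w) &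
     (nth 0 w i < bl) &&
     all (fun y => (y < bl) ==> (y < nth 0 w i)) (take i w)].

Example ex_lrs : lrs [:: [:: 2; 10; 12; 7]; [:: 5; 9; 1; 8; 6]; [:: 3; 11; 4]] = [:: 12; 11].
Proof. by []. Qed.
Example ex_rls : rls [:: [:: 2; 10; 12; 7]; [:: 5; 9; 1; 8; 6]; [:: 3; 11; 4]] = [:: 2; 3].
Proof. by []. Qed.
Example ex_assemblee : is_assemblee 12 3 [:: [:: 2; 10; 12; 7]; [:: 5; 9; 1; 8; 6]; [:: 3; 11; 4]].
Proof. by []. Qed.

From mathcomp Require Import all_boot all_order all_algebra zify ring.
Import GRing.Theory.
Set Implicit Arguments. Unset Strict Implicit. Unset Printing Implicit Defensive.

(* Both statistics count records: |lrs A| is the number of right-to-left maxima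
   of the subword of elements above b_1, and |rls A| the number of left-to-right
   maxima of the subword of elements below b_(r+1).  Reversing in place the order
   of the elements below b_(r+1) is an involution on assemblees that turns the
   latter into right-to-left maxima as well, so we may weight A by a^x b^y where
   x and y count the right-to-left maxima of the two subwords.
   Let S_p(m) be the sum of these weights over the assemblees of size (m, s)
   whose first p blocks are singletons.  Removing the head of block p+1 (when it
   is not a singleton) and standardizing is a bijection onto the pairs (A', v)
   with A' counted by S_p(m-1) and v in 1..m.  As the first p blocks consist of
   block-ends only, v is the first letter of the subword it falls in: it is a
   new record above b_1 iff v = m, and below b_(r+1) iff v is the last
   block-end of A'.  Hence
     S_p(m) = (a + b + m - 2) S_p(m-1) + S_(p+1)(m),    S_s(m) = [m = s],
   which is solved by a binomial coefficient times a rising product. *)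

(** * Records of a word *)

Fixpoint count_rlmax (s : seq nat) : nat :=
  if s is x :: s' then count_rlmax s' + all (fun y => y < x) s' else 0.

Lemma count_rlmax_mono (f : nat -> nat) s :
  {mono f : x y / x < y} -> count_rlmax (map f s) = count_rlmax s.
Proof. by move=> f_mono; elim: s => //= x s ->; rewrite all_map (eq_all (f_mono ^~ x)). Qed.

Lemma count_rlmax_above t w :
  count (fun i => (t < nth 0 w i) &&
     all (fun y => (t < y) ==> (y < nth 0 w i)) (drop i.+1 w)) (iota 0 (size w))
  = count_rlmax [seq y <- w | t < y].
Proof.
elim: w => [|x w IH] //=.
rewrite -(addn0 1) iotaDl count_map /= (eq_count (a2 := fun i => (t < nth 0 w i) &&
     all (fun y => (t < y) ==> (y < nth 0 w i)) (drop i.+1 w))) // IH.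
by case: (t < x); rewrite //= drop0 all_filter addnC.
Qed.

Lemma count_lrmax_below t w :
  count (fun i => (nth 0 w i < t) &&
     all (fun y => (y < t) ==> (y < nth 0 w i)) (take i w)) (iota 0 (size w))
  = count_rlmax (rev [seq y <- w | y < t]).
Proof.
elim/last_ind: w => [|w x IH] //.
rewrite size_rcons -addn1 iotaD count_cat /= add0n.
rewrite (eq_in_count (a2 := fun i => (nth 0 w i < t) &&
     all (fun y => (y < t) ==> (y < nth 0 w i)) (take i w))); last first.
  move=> i; rewrite mem_iota /= add0n => lt_i_w.
  by rewrite nth_rcons lt_i_w -cats1 takel_cat // ltnW.
rewrite IH nth_rcons ltnn eqxx -cats1 take_size_cat // filter_cat /=.
case: (x < t) => /=; last by rewrite cats0 !addn0.
by rewrite cats1 rev_rcons /= all_rev all_filter addn0.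
Qed.

(** * Assemblees *)

Definition first_end (A : seq (seq nat)) := head 0 (block_ends A).
Definition last_end (A : seq (seq nat)) := last 0 (block_ends A).
Definition highs A := [seq y <- flatten A | first_end A < y].
Definition lows A := [seq y <- flatten A | y < last_end A].

Lemma size_lrs A : size (lrs A) = count_rlmax (highs A).
Proof. by rewrite /lrs size_map size_filter count_rlmax_above. Qed.

Lemma size_rls A : size (rls A) = count_rlmax (rev (lows A)).
Proof. by rewrite /rls size_map size_filter count_lrmax_below. Qed.

Lemma mem_all_lists k xs (l : seq nat) :
  (l \in all_lists k xs) = (size l == k) && all (fun x => x \in xs) l.
Proof.
elim: k l => [|k IH] [|y l] //=.
- by apply/allpairsPdep => -[x [l' [_ _ //]]].
- apply/allpairsPdep/idP => [[x [l' [x_xs l'_xs [-> ->]]]]|].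
    by move: l'_xs; rewrite IH eqSS x_xs => /andP[-> ->].
  by rewrite eqSS => /and3P[size_l y_xs l_xs]; exists y, l; rewrite IH size_l.
Qed.

Lemma size_le_flatten (T : eqType) (A : seq (seq T)) B :
  B \in A -> size B <= size (flatten A).
Proof.
elim: A => [|C A IH] //=; rewrite in_cons size_cat => /orP[/eqP->|/IH le_B_A].
  exact: leq_addr.
by rewrite (leq_trans le_B_A) // leq_addl.
Qed.

Lemma mem_assemblees m s A : (A \in assemblees m s) = is_assemblee m s A.
Proof.
rewrite mem_undup mem_filter; apply/andP/idP => [[]//|A_ass]; split => //.
move: (A_ass) => /and4P[/eqP <- _ A_perm _].
rewrite /assemblee_candidates -(flattenK A); apply: allpairs_f.
  by rewrite mem_permutations.
rewrite mem_all_lists flattenK size_map eqxx andTb; apply/allP => _ /mapP[B B_A ->].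
rewrite mem_iota add0n ltnS -(size_iota 1 m) -(perm_size A_perm).
exact: size_le_flatten.
Qed.

Lemma sorted_gt_last_le (e : seq nat) :
  sorted (fun x y => y < x) e -> all (fun y => last 0 e <= y) e.
Proof.
case: e => [|x e] //=; elim: e x => [|z e IH] x /=; first by rewrite leqnn.
move=> /andP[lt_zx /IH /= /andP[le_z ->]].
by rewrite le_z (leq_trans le_z (ltnW lt_zx)).
Qed.

Lemma sorted_gt_le_head (e : seq nat) :
  sorted (fun x y => y < x) e -> all (fun y => y <= head 0 e) e.
Proof.
case: e => [|x e] //= e_sorted; rewrite leqnn /=.
have: all (fun y => y < x) e.
  by apply: (order_path_min _ e_sorted) => u v w /= lt_vu lt_wv; exact: ltn_trans lt_wv lt_vu.
by apply: sub_all => y; apply: ltnW.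
Qed.

Section AssembleeFacts.
Variables (m s : nat) (A : seq (seq nat)).
Hypothesis A_ass : is_assemblee m s A.

Lemma assemblee_size : size A = s.
Proof. by case/and4P: A_ass => /eqP. Qed.

Lemma assemblee_nonempty : all (fun B => size B != 0) A.
Proof. by case/and4P: A_ass. Qed.

Lemma assemblee_perm : perm_eq (flatten A) (iota 1 m).
Proof. by case/and4P: A_ass. Qed.

Lemma assemblee_sorted : sorted (fun x y => y < x) (block_ends A).
Proof. by case/and4P: A_ass. Qed.

Lemma mem_flatten_assemblee x : (x \in flatten A) = (0 < x <= m).
Proof. by rewrite (perm_mem assemblee_perm) mem_iota add1n ltnS. Qed.

Lemma assemblee_uniq : uniq (flatten A).
Proof. by rewrite (perm_uniq assemblee_perm) iota_uniq. Qed.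

Lemma block_end_bounds e : e \in block_ends A -> last_end A <= e <= first_end A.
Proof.
move=> e_end.
move/allP: (sorted_gt_last_le assemblee_sorted) => /(_ e e_end) ->.
by move/allP: (sorted_gt_le_head assemblee_sorted) => /(_ e e_end).
Qed.

Lemma last_end_le_first_end : last_end A <= first_end A.
Proof.
rewrite /last_end /first_end; move/allP: (sorted_gt_last_le assemblee_sorted).
by case: (block_ends A) => //= x e /(_ x (mem_head x e)).
Qed.

Lemma assemblee_le : s <= m.
Proof.
rewrite -assemblee_size -(size_iota 1 m) -(perm_size assemblee_perm) size_flatten.
elim: A assemblee_nonempty => //= B A' IH /andP[B_nonempty /IH].
by move=> le_A; rewrite -add1n leq_add // lt0n.
Qed.

Lemma mem_block_ends_flatten e : e \in block_ends A -> e \in flatten A.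
Proof.
elim: (A) assemblee_nonempty => //= -[|x B] A' IH //= A'_nonempty.
rewrite in_cons -cat_cons mem_cat => /orP[/eqP -> | /(IH A'_nonempty) ->].
  by rewrite mem_last.
by rewrite orbT.
Qed.

Hypothesis s_gt0 : 0 < s.

Let block_ends_nonempty : block_ends A != [::].
Proof. by rewrite -size_eq0 size_map assemblee_size -lt0n. Qed.

Lemma first_end_le : first_end A <= m.
Proof.
have: first_end A \in block_ends A.
  rewrite /first_end; case: (block_ends A) block_ends_nonempty => // x e _.
  exact: mem_head.
by move/mem_block_ends_flatten; rewrite mem_flatten_assemblee => /andP[].
Qed.

Lemma last_end_gt0 : 0 < last_end A.
Proof.
have: last_end A \in block_ends A.
  rewrite /last_end; case: (block_ends A) block_ends_nonempty => // x e _.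
  exact: mem_last.
by move/mem_block_ends_flatten; rewrite mem_flatten_assemblee => /andP[].
Qed.

End AssembleeFacts.

(** * Reversing the elements below the last block-end *)

Section Refill.
Variables (T : eqType) (P : pred T).

Fixpoint refill (w s : seq T) : seq T :=
  if w is x :: w' then
    if P x then head x s :: refill w' (behead s) else x :: refill w' s
  else [::].

Fixpoint refill_blocks (A : seq (seq T)) (s : seq T) : seq (seq T) :=
  if A is B :: A' then refill B s :: refill_blocks A' (drop (count P B) s) else [::].

Lemma size_refill w s : size (refill w s) = size w.
Proof. by elim: w s => //= x w IH s; case: (P x); rewrite /= IH. Qed.

Lemma refill_cat u v s : refill (u ++ v) s = refill u s ++ refill v (drop (count P u) s).
Proof.
elim: u s => [|x u IH] s /=; first by rewrite drop0.
by case: (P x); rewrite /= IH //; case: s.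
Qed.

Lemma flatten_refill_blocks A s : flatten (refill_blocks A s) = refill (flatten A) s.
Proof. by elim: A s => //= B A IH s; rewrite refill_cat IH. Qed.

Lemma shape_refill_blocks A s : shape (refill_blocks A s) = shape A.
Proof. by elim: A s => //= B A IH s; rewrite size_refill IH. Qed.

Lemma refill_blocksE A s : refill_blocks A s = reshape (shape A) (refill (flatten A) s).
Proof. by rewrite -flatten_refill_blocks -(shape_refill_blocks A s) flattenK. Qed.

Lemma last_refill x B s y : ~~ P (last x B) -> last y (refill (x :: B) s) = last x B.
Proof.
elim: B x s y => [|z B IH] x s y /=; first by move=> /negbTE ->.
by move=> last_notP; case: (P x); rewrite /= IH.
Qed.

Lemma map_last_refill_blocks x0 A s :
  all (fun B => size B != 0) A -> all (predC P) (map (last x0) A) ->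
  map (last x0) (refill_blocks A s) = map (last x0) A.
Proof.
elim: A s => //= -[|x B] A IH s //= A_nonempty /andP[end_notP ends_notP].
by rewrite last_refill // IH.
Qed.

Lemma filter_refill w s : all P s -> size s = count P w -> filter P (refill w s) = s.
Proof.
elim: w s => [|x w IH] s /=; first by case: s.
case Px: (P x) => /=; last by rewrite Px => s_P s_size; rewrite IH.
by case: s => [|y s] //= /andP[-> s_P] [s_size]; rewrite IH.
Qed.

Lemma filter_refill_disjoint (Q : pred T) w s :
  all P s -> (forall x, P x -> ~~ Q x) -> filter Q (refill w s) = filter Q w.
Proof.
move=> + PnQ; elim: w s => [|x w IH] s //= s_P.
case Px: (P x) => /=; last by rewrite IH.
rewrite (negbTE (PnQ _ Px)); case: s s_P => [|y s] /=.
  by move=> _; rewrite (negbTE (PnQ _ Px)) IH.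
by move=> /andP[Py s_P]; rewrite (negbTE (PnQ _ Py)) IH.
Qed.

Lemma perm_refill w s : size s = count P w -> perm_eq (refill w s) (filter (predC P) w ++ s).
Proof.
elim: w s => [|x w IH] s /=; first by case: s.
case Px: (P x) => /=; last by move=> s_size; rewrite perm_cons IH.
case: s => [|y s] //= [s_size].
by rewrite perm_sym -(cat1s y s) perm_catCA /= perm_cons perm_sym IH.
Qed.

Lemma refill_filter w : refill w (filter P w) = w.
Proof. by elim: w => //= x w IH; case Px: (P x); rewrite /= IH. Qed.

Lemma refill_refill w s t : all P s -> size s = count P w -> size t = count P w ->
  refill (refill w s) t = refill w t.
Proof.
elim: w s t => [|x w IH] s t //=.
case Px: (P x) => /=; last by rewrite Px => s_P s_size t_size; rewrite IH.
case: s => [|y s] //; case: t => [|z t] //= /andP[-> s_P] [s_size] [t_size].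
by rewrite IH.
Qed.

End Refill.

Definition rev_lows (A : seq (seq nat)) :=
  refill_blocks (fun y => y < last_end A) A (rev (lows A)).

Section RevLows.
Variables (m s : nat) (A : seq (seq nat)).
Hypothesis A_ass : is_assemblee m s A.

Lemma block_ends_rev_lows : block_ends (rev_lows A) = block_ends A.
Proof.
apply: map_last_refill_blocks (assemblee_nonempty A_ass) _.
by apply/allP => e /(block_end_bounds A_ass) /andP[le_e _]; rewrite /= -leqNgt.
Qed.

Lemma last_end_rev_lows : last_end (rev_lows A) = last_end A.
Proof. by rewrite /last_end block_ends_rev_lows. Qed.

Lemma first_end_rev_lows : first_end (rev_lows A) = first_end A.
Proof. by rewrite /first_end block_ends_rev_lows. Qed.

Let rev_lows_below : all (fun y => y < last_end A) (rev (lows A)).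
Proof. by rewrite all_rev filter_all. Qed.

Let size_rev_lows_count : size (rev (lows A)) = count (fun y => y < last_end A) (flatten A).
Proof. by rewrite size_rev size_filter. Qed.

Lemma lows_rev_lows : lows (rev_lows A) = rev (lows A).
Proof.
by rewrite {1}/lows last_end_rev_lows flatten_refill_blocks filter_refill.
Qed.

Lemma highs_rev_lows : highs (rev_lows A) = highs A.
Proof.
rewrite /highs first_end_rev_lows flatten_refill_blocks filter_refill_disjoint //.
move=> x lt_x_last; rewrite -leqNgt.
exact: leq_trans (ltnW lt_x_last) (last_end_le_first_end A_ass).
Qed.

Lemma rev_lowsK : rev_lows (rev_lows A) = A.
Proof.
rewrite {1}/rev_lows lows_rev_lows revK last_end_rev_lows refill_blocksE.
rewrite shape_refill_blocks flatten_refill_blocks refill_refill ?size_filter //.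
by rewrite refill_filter flattenK.
Qed.

Lemma rev_lows_assemblee : is_assemblee m s (rev_lows A).
Proof.
have shape_rl : map size (rev_lows A) = map size A by exact: shape_refill_blocks.
apply/and4P; split.
- by rewrite -(size_map size) shape_rl size_map (assemblee_size A_ass).
- by rewrite -(all_map size (fun n => n != 0)) shape_rl all_map (assemblee_nonempty A_ass).
- rewrite flatten_refill_blocks; apply: perm_trans (perm_refill size_rev_lows_count) _.
  apply: perm_trans (assemblee_perm A_ass); rewrite perm_catC perm_sym.
  by rewrite -(perm_filterC (fun y => y < last_end A)) perm_cat2r perm_sym perm_rev.
- by rewrite /= block_ends_rev_lows (assemblee_sorted A_ass).
Qed.

End RevLows.

Lemma big_rev_lows (R : Type) (idx : R) (op : Monoid.com_law idx) m s
    (F : seq (seq nat) -> R) :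
  \big[op/idx]_(A <- assemblees m s) F (rev_lows A) =
  \big[op/idx]_(A <- assemblees m s) F A.
Proof.
rewrite -(big_map rev_lows predT F); apply/perm_big/uniq_perm => [||A].
- rewrite map_inj_in_uniq ?undup_uniq // => A B.
  rewrite !mem_assemblees => A_ass B_ass eq_rl.
  by rewrite -(rev_lowsK A_ass) eq_rl (rev_lowsK B_ass).
- exact: undup_uniq.
- rewrite mem_assemblees; apply/mapP/idP => [[B + ->]|A_ass].
    by rewrite mem_assemblees => /rev_lows_assemblee.
  by exists (rev_lows A); rewrite ?mem_assemblees (rev_lows_assemblee, rev_lowsK A_ass).
Qed.

(** * Inserting a value at the head of a block *)

Section ConsBlock.
Variable T : eqType.
Implicit Types (x : T) (A : seq (seq T)).

Fixpoint cons_block p x A : seq (seq T) :=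
  match p, A with
  | 0, B :: A' => (x :: B) :: A'
  | p'.+1, B :: A' => B :: cons_block p' x A'
  | _, [::] => [::]
  end.

Fixpoint behead_block p A : seq (seq T) :=
  match p, A with
  | 0, B :: A' => behead B :: A'
  | p'.+1, B :: A' => B :: behead_block p' A'
  | _, [::] => [::]
  end.

Definition lead_singletons p A := all (fun B => size B == 1) (take p A).

Lemma size_cons_block p x A : size (cons_block p x A) = size A.
Proof. by elim: A p => [|B A IH] [|p] //=; rewrite IH. Qed.

Lemma size_behead_block p A : size (behead_block p A) = size A.
Proof. by elim: A p => [|B A IH] [|p] //=; rewrite IH. Qed.

Lemma nth_cons_block p x A : p < size A -> nth [::] (cons_block p x A) p = x :: nth [::] A p.
Proof. by elim: A p => [|B A IH] [|p] //= lt_p_A; rewrite IH. Qed.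

Lemma lead_singletons_cons_block p x A :
  lead_singletons p (cons_block p x A) = lead_singletons p A.
Proof. by rewrite /lead_singletons; elim: A p => [|B A IH] [|p] //=; rewrite IH. Qed.

Lemma lead_singletonsS p A : p < size A ->
  lead_singletons p.+1 A = lead_singletons p A && (size (nth [::] A p) == 1).
Proof. by move=> lt_p_A; rewrite /lead_singletons (take_nth [::]) // all_rcons andbC. Qed.

Lemma flatten_cons_block p x A : p < size A ->
  flatten (cons_block p x A) = flatten (take p A) ++ x :: flatten (drop p A).
Proof. by elim: A p => [|B A IH] [|p] //= lt_p_A; rewrite IH // catA. Qed.

Lemma perm_cons_block p x A : p < size A ->
  perm_eq (flatten (cons_block p x A)) (x :: flatten A).
Proof.
move=> lt_p_A; rewrite flatten_cons_block // perm_sym.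
by rewrite -{1}(cat_take_drop p A) flatten_cat -cat1s perm_catCA.
Qed.

Lemma nonempty_cons_block p x A :
  all (fun B => size B != 0) A -> all (fun B => size B != 0) (cons_block p x A).
Proof. by elim: A p => [|B A IH] [|p] //= /andP[B_ne A_ne]; rewrite ?B_ne ?IH. Qed.

Lemma nonempty_behead_block p A : all (fun B => size B != 0) A ->
  1 < size (nth [::] A p) -> all (fun B => size B != 0) (behead_block p A).
Proof.
elim: A p => [|B A IH] [|p] //= /andP[B_nonempty A_nonempty].
  by rewrite A_nonempty andbT; case: B {B_nonempty} => [|? []].
by move=> /(IH _ A_nonempty) ->; rewrite B_nonempty.
Qed.

Lemma map_last_cons_block x0 p x A :
  all (fun B => size B != 0) A -> map (last x0) (cons_block p x A) = map (last x0) A.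
Proof. by elim: A p => [|B A IH] [|p] //= /andP[]; [case: B | move=> _ /IH ->]. Qed.

Lemma cons_blockK p x A : behead_block p (cons_block p x A) = A.
Proof. by elim: A p => [|B A IH] [|p] //=; rewrite IH. Qed.

Lemma behead_blockK x0 p A : p < size A -> size (nth [::] A p) != 0 ->
  cons_block p (head x0 (nth [::] A p)) (behead_block p A) = A.
Proof. by elim: A p => [|B A IH] [|p] //=; [case: B | move=> *; rewrite IH]. Qed.

Lemma nonempty_map (f : T -> T) A :
  all (fun B => size B != 0) (map (map f) A) = all (fun B => size B != 0) A.
Proof. by rewrite all_map; apply: eq_all => B; rewrite /= size_map. Qed.

End ConsBlock.

Lemma ltn_bump2 h i j : (bump h i < bump h j) = (i < j).
Proof. by rewrite !ltnNge leq_bump2. Qed.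

Lemma ltn_bumpl h i : (bump h i < h) = (i < h).
Proof. by rewrite /bump; case: leqP; lia. Qed.

Lemma ltn_bumpr h i : (h < bump h i) = (h <= i).
Proof. by rewrite /bump; case: leqP; lia. Qed.

Lemma bump0 h : 0 < h -> bump h 0 = 0.
Proof. by rewrite /bump; case: h. Qed.

Lemma perm_iota_bump m v : 0 < v <= m.+1 ->
  perm_eq (iota 1 m.+1) (v :: map (bump v) (iota 1 m)).
Proof.
move=> v_range; apply: uniq_perm; rewrite ?iota_uniq //=.
  rewrite (map_inj_uniq (can_inj (bumpK v))) iota_uniq andbT.
  by apply/mapP => -[y _ /eqP]; rewrite (negbTE (neq_bump v y)).
move=> x; rewrite in_cons mem_iota; apply/idP/orP => [x_range | [/eqP -> | ]].
- have [-> | ne_xv] := eqVneq x v; [by left | right].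
  apply/mapP; exists (unbump v x); last by rewrite unbumpK // inE.
  by rewrite mem_iota; move: ne_xv x_range; rewrite /unbump; case: ltnP; lia.
- by lia.
- by case/mapP => y; rewrite mem_iota /bump => y_range ->; case: leqP; lia.
Qed.

Definition insert_at p v (A : seq (seq nat)) := cons_block p v (map (map (bump v)) A).

Lemma block_ends_insert_at p v A : 0 < v -> all (fun B => size B != 0) A ->
  block_ends (insert_at p v A) = map (bump v) (block_ends A).
Proof.
move=> v_gt0 A_nonempty; rewrite /block_ends map_last_cons_block ?nonempty_map //.
by rewrite -!map_comp; apply: eq_map => B /=; rewrite -{1}(bump0 v_gt0) last_map.
Qed.

Lemma is_assemblee_insert_at m s p v A :
  0 < v <= m.+1 -> p < size A -> all (fun B => size B != 0) A ->
  is_assemblee m.+1 s (insert_at p v A) = is_assemblee m s A.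
Proof.
move=> v_range lt_p_A A_nonempty.
have v_gt0 : 0 < v by case/andP: v_range.
rewrite /is_assemblee block_ends_insert_at // sorted_map.
rewrite (eq_sorted (e' := fun x y => y < x)); last by move=> x y /=; rewrite ltn_bump2.
rewrite /insert_at size_cons_block size_map nonempty_cons_block ?nonempty_map //.
rewrite A_nonempty (permPl (perm_cons_block _ _)) ?size_map //.
rewrite (permPr (perm_iota_bump v_range)) perm_cons -map_flatten.
suff -> : perm_eq (map (bump v) (flatten A)) (map (bump v) (iota 1 m)) =
          perm_eq (flatten A) (iota 1 m) by [].
by apply/idP/idP => [/(perm_map_inj (can_inj (bumpK v))) | /(perm_map (bump v))].
Qed.

Lemma lead_singletons_insert_at p v A :
  lead_singletons p (insert_at p v A) = lead_singletons p A.
Proof.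
rewrite /insert_at lead_singletons_cons_block /lead_singletons -map_take all_map.
by apply: eq_all => B; rewrite /= size_map.
Qed.

Lemma insert_at_inj p v1 v2 A1 A2 : p < size A1 -> p < size A2 ->
  insert_at p v1 A1 = insert_at p v2 A2 -> v1 = v2 /\ A1 = A2.
Proof.
move=> lt_p_A1 lt_p_A2 eq_ins.
have eq_v : v1 = v2.
  move: (congr1 (fun A => head 0 (nth [::] A p)) eq_ins).
  by rewrite /insert_at !nth_cons_block ?size_map.
split=> //; move: (congr1 (behead_block p) eq_ins).
by rewrite eq_v /insert_at !cons_blockK => /(inj_map (inj_map (can_inj (bumpK v2)))).
Qed.

Lemma insert_at_surj m s p A : is_assemblee m.+1 s A -> p < s ->
    1 < size (nth [::] A p) ->
  exists v A', [/\ 0 < v <= m.+1, is_assemblee m s A',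
                    lead_singletons p A' = lead_singletons p A & A = insert_at p v A'].
Proof.
move=> A_ass lt_p_s big_block.
have lt_p_A : p < size A by rewrite (assemblee_size A_ass).
have block_ne : size (nth [::] A p) != 0 by case: (size _) big_block.
set v := head 0 (nth [::] A p); set A0 := behead_block p A.
have A0_cons : cons_block p v A0 = A by exact: behead_blockK.
have perm_A : perm_eq (flatten A) (v :: flatten A0).
  by rewrite -{1}A0_cons perm_cons_block // size_behead_block.
have v_notin : v \notin flatten A0.
  by have := assemblee_uniq A_ass; rewrite (perm_uniq perm_A) => /andP[].
have v_range : 0 < v <= m.+1.
  by rewrite -(mem_flatten_assemblee A_ass) (perm_mem perm_A) mem_head.
exists v, (map (map (unbump v)) A0).
have A_ins : A = insert_at p v (map (map (unbump v)) A0).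
  rewrite /insert_at -map_comp map_id_in ?A0_cons // => B B_A0 /=.
  rewrite -map_comp map_id_in // => y y_B /=; apply: unbumpK.
  by apply: contraNneq v_notin => <-; apply/flattenP; exists B.
split=> //.
- rewrite -(@is_assemblee_insert_at m s p v) -?A_ins //.
    by rewrite size_map size_behead_block.
  by rewrite nonempty_map nonempty_behead_block ?(assemblee_nonempty A_ass).
- by rewrite -(lead_singletons_insert_at p v) -A_ins.
Qed.

Lemma perm_insert_at m s p : p < s ->
  perm_eq [seq A <- assemblees m.+1 s | lead_singletons p A && (1 < size (nth [::] A p))]
          [seq insert_at p v A | A <- [seq A <- assemblees m s | lead_singletons p A],
                                 v <- iota 1 m.+1].
Proof.
move=> lt_p_s; apply: uniq_perm; first by rewrite filter_uniq // undup_uniq.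
  apply: allpairs_uniq => [||[A1 v1] [A2 v2]]; rewrite ?filter_uniq ?undup_uniq ?iota_uniq //.
  move=> /allpairsP[[A1' v1'] [+ _ [-> ->]]] /allpairsP[[A2' v2'] [+ _ [-> ->]]] /=.
  rewrite !mem_filter !mem_assemblees => /andP[_ /assemblee_size A1_s].
  move=> /andP[_ /assemblee_size A2_s] /insert_at_inj[]; rewrite ?A1_s ?A2_s //.
  by move=> -> ->.
move=> A; rewrite mem_filter mem_assemblees.
apply/andP/allpairsP => [[/andP[A_lead big_block] A_ass] | [[A' v] /= [+ + ->]]].
  have [v [A' [v_range A'_ass A'_lead ->]]] := insert_at_surj A_ass lt_p_s big_block.
  exists (A', v); rewrite mem_filter mem_assemblees mem_iota A'_ass A'_lead A_lead.
  by rewrite add1n ltnS.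
rewrite mem_filter mem_assemblees -/(iota 1 m.+1) mem_iota add1n ltnS.
move=> /andP[A'_lead A'_ass] v_range.
have lt_p_A' : p < size A' by rewrite (assemblee_size A'_ass).
rewrite is_assemblee_insert_at ?(assemblee_nonempty A'_ass) // A'_ass.
rewrite lead_singletons_insert_at A'_lead /insert_at nth_cons_block ?size_map //=.
by rewrite (nth_map [::]) // size_map ltnS lt0n (allP (assemblee_nonempty A'_ass)) ?mem_nth.
Qed.

Lemma all_ltn_filter_gtn_iota m t v :
  t < v -> all (fun y => y < v) [seq y <- iota 1 m | t < y] = (m < v).
Proof.
move=> lt_tv; rewrite all_filter; apply/allP/idP => [all_lt | lt_mv y].
  by case: (leqP v m) => // le_vm; have := all_lt m; rewrite mem_iota /=; lia.
by rewrite mem_iota /=; lia.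
Qed.

Lemma all_ltn_filter_ltn_iota m t v : 0 < v -> t <= m.+1 ->
  all (fun y => y < v) [seq y <- iota 1 m | y < t] = (t <= v).
Proof.
move=> v_gt0 le_t_m; rewrite all_filter; apply/allP/idP => [all_lt | le_tv y].
  by case: (leqP t v) => // lt_vt; have := all_lt t.-1; rewrite mem_iota /=; lia.
by rewrite mem_iota /=; lia.
Qed.

Lemma lead_singletons_sub_ends p A :
  lead_singletons p A -> {subset flatten (take p A) <= block_ends A}.
Proof.
elim: A p => [|B A IH] [|p] //= /andP[B_single A_lead] x.
case: B B_single => [|y [|]] //= _; rewrite !in_cons => /orP[-> // | /(IH _ A_lead) ->].
by rewrite orbT.
Qed.

Section InsertAtStatistics.
Variables (m s p v : nat) (A : seq (seq nat)).
Hypotheses (A_ass : is_assemblee m s A) (A_lead : lead_singletons p A).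
Hypotheses (lt_p_s : p < s) (v_range : 0 < v <= m.+1).

Let v_gt0 : 0 < v. Proof. by case/andP: v_range. Qed.
Let s_gt0 : 0 < s. Proof. exact: leq_ltn_trans lt_p_s. Qed.
Let A_nonempty := assemblee_nonempty A_ass.

Lemma first_end_insert_at : first_end (insert_at p v A) = bump v (first_end A).
Proof.
by rewrite /first_end block_ends_insert_at //; case: (block_ends A) => //=; rewrite bump0.
Qed.

Lemma last_end_insert_at : last_end (insert_at p v A) = bump v (last_end A).
Proof. by rewrite /last_end block_ends_insert_at // -{1}(bump0 v_gt0) last_map. Qed.

Lemma filter_insert_at (Q : pred nat) : {in block_ends A, forall e, ~~ Q (bump v e)} ->
  filter Q (flatten (insert_at p v A)) = filter Q (v :: map (bump v) (flatten A)).
Proof.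
move=> notQ_ends; have lt_p_A : p < size A by rewrite (assemblee_size A_ass).
set X := map (map (bump v)) A.
have filter_lead : filter Q (flatten (take p X)) = [::].
  rewrite (eq_in_filter (a2 := pred0)) ?filter_pred0 // => y.
  rewrite /X -map_take -map_flatten => /mapP[x /(lead_singletons_sub_ends A_lead) x_end ->].
  exact/negbTE/notQ_ends.
rewrite /insert_at flatten_cons_block ?size_map // map_flatten -/X.
by rewrite -[in RHS](cat_take_drop p X) flatten_cat /= !filter_cat filter_lead.
Qed.

Lemma count_rlmax_highs_insert_at :
  count_rlmax (highs (insert_at p v A)) = count_rlmax (highs A) + (v == m.+1).
Proof.
rewrite /highs first_end_insert_at filter_insert_at; last first.
  by move=> e /(block_end_bounds A_ass) /andP[_ le_e]; rewrite ltn_bump2 -leqNgt.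
rewrite /= ltn_bumpl filter_map (eq_filter (a2 := fun y => first_end A < y)); last first.
  by move=> y; rewrite /= ltn_bump2.
have bump_mono : {mono bump v : x y / x < y} by move=> x y; exact: ltn_bump2.
case: (ltnP (first_end A) v) => [lt_end_v | le_v_end] /=; rewrite count_rlmax_mono //; last first.
  have /negbTE -> : v != m.+1.
    by rewrite neq_ltn ltnS (leq_trans le_v_end (first_end_le A_ass s_gt0)).
  by rewrite addn0.
rewrite all_map (eq_all (a2 := fun y => y < v)); last by move=> y; rewrite /= ltn_bumpl.
rewrite (perm_all _ (perm_filter _ (assemblee_perm A_ass))).
by rewrite all_ltn_filter_gtn_iota // eqn_leq ltnNge -ltnS; case/andP: v_range => _ ->.
Qed.

Lemma count_rlmax_lows_insert_at :
  count_rlmax (lows (insert_at p v A)) = count_rlmax (lows A) + (v == last_end A).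
Proof.
rewrite /lows last_end_insert_at filter_insert_at; last first.
  by move=> e /(block_end_bounds A_ass) /andP[le_e _]; rewrite ltn_bump2 -leqNgt.
rewrite /= ltn_bumpr filter_map (eq_filter (a2 := fun y => y < last_end A)); last first.
  by move=> y; rewrite /= ltn_bump2.
have bump_mono : {mono bump v : x y / x < y} by move=> x y; exact: ltn_bump2.
case: (leqP v (last_end A)) => [le_v_end | lt_end_v] /=; rewrite count_rlmax_mono //; last first.
  by rewrite gtn_eqF ?addn0.
rewrite all_map (eq_all (a2 := fun y => y < v)); last by move=> y; rewrite /= ltn_bumpl.
rewrite (perm_all _ (perm_filter _ (assemblee_perm A_ass))) all_ltn_filter_ltn_iota //.
  by rewrite eqn_leq le_v_end.
exact: leq_trans (last_end_le_first_end A_ass) (leq_trans (first_end_le A_ass s_gt0) _).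
Qed.

End InsertAtStatistics.

(** * Weighted sums *)

Lemma singleton_blocksE (T : Type) (x0 : T) (A : seq (seq T)) :
  all (fun B => size B == 1) A -> A = [seq [:: x] | x <- map (last x0) A].
Proof. by elim: A => //= -[|x [|]] A IH //= /IH <-. Qed.

Definition singletons s := [seq [:: x] | x <- rev (iota 1 s)].

Lemma singletons_assemblee s : is_assemblee s s (singletons s).
Proof.
apply/and4P; split.
- by rewrite size_map size_rev size_iota.
- by rewrite all_map; apply/allP.
- by rewrite flatten_seq1 perm_rev.
- by rewrite /block_ends -map_comp map_id rev_sorted iota_ltn_sorted.
Qed.

Lemma lead_singletons_full m s A :
  is_assemblee m s A -> lead_singletons s A -> m = s /\ A = singletons s.
Proof.
move=> A_ass A_lead.
have A_eq : A = [seq [:: x] | x <- block_ends A].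
  apply: singleton_blocksE; move: A_lead.
  by rewrite /lead_singletons take_oversize // (assemblee_size A_ass).
have flat_A : flatten A = block_ends A by rewrite {1}A_eq flatten_seq1.
have m_s : m = s.
  rewrite -(size_iota 1 m) -(perm_size (assemblee_perm A_ass)) flat_A size_map.
  exact: assemblee_size A_ass.
split=> //; rewrite A_eq /singletons; congr (map _ _).
have gtn_trans : transitive (fun x y : nat => y < x).
  by move=> y x z lt_yx lt_zy; exact: ltn_trans lt_zy lt_yx.
apply: (irr_sorted_eq gtn_trans) => [x | | | x]; rewrite ?ltnn ?(assemblee_sorted A_ass) //.
  by rewrite rev_sorted iota_ltn_sorted.
by rewrite mem_rev -flat_A (perm_mem (assemblee_perm A_ass)) m_s.
Qed.

Lemma highs_lows_singletons s : highs (singletons s) = [::] /\ lows (singletons s) = [::].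
Proof.
have s_ass := singletons_assemblee s.
have flat_ends : flatten (singletons s) = block_ends (singletons s).
  by rewrite flatten_seq1 /block_ends -map_comp map_id.
rewrite /highs /lows flat_ends; split.
  rewrite (eq_in_filter (a2 := pred0)) ?filter_pred0 // => e /(block_end_bounds s_ass).
  by case/andP => _ le_e; rewrite /= ltnNge le_e.
rewrite (eq_in_filter (a2 := pred0)) ?filter_pred0 // => e /(block_end_bounds s_ass).
by case/andP => le_e _; rewrite /= ltnNge le_e.
Qed.

Section Weights.
Variables (R : comPzRingType) (a b : R).
Local Open Scope ring_scope.

Definition weight A := a ^+ count_rlmax (highs A) * b ^+ count_rlmax (lows A).

Lemma weight_insert_at m s p v A : is_assemblee m s A -> lead_singletons p A ->
    (p < s)%N -> (0 < v <= m.+1)%N ->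
  weight (insert_at p v A) = a ^+ (v == m.+1) * b ^+ (v == last_end A) * weight A.
Proof.
move=> A_ass A_lead lt_p_s v_range; rewrite /weight.
rewrite (count_rlmax_highs_insert_at A_ass) ?(count_rlmax_lows_insert_at A_ass) //.
by rewrite !exprD; ring.
Qed.

Lemma sum_insert_factor m L : (0 < L <= m)%N ->
  \sum_(v <- iota 1 m.+1) a ^+ (v == m.+1) * b ^+ (v == L) = a + b + m.-1%:R.
Proof.
move=> L_range; rewrite -[X in iota _ X]addn1 iotaD big_cat big_seq1 /= add1n eqxx.
rewrite gtn_eqF; last by case/andP: L_range => _; rewrite ltnS.
rewrite (eq_big_seq (fun v => b ^+ (v == L))); last first.
  by move=> v; rewrite mem_iota add1n => /andP[_ /ltn_eqF ->]; rewrite mul1r.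
rewrite (bigD1_seq L) ?iota_uniq ?mem_iota ?add1n ?ltnS //= eqxx.
rewrite (eq_bigr (fun=> 1)) => [|v /negbTE ->] //.
have count_ne : count (predC (pred1 L)) (iota 1 m) = m.-1.
  have L_in : L \in iota 1 m by rewrite mem_iota add1n ltnS.
  have := count_predC (pred1 L) (iota 1 m).
  by rewrite count_uniq_mem ?iota_uniq // L_in size_iota; lia.
by rewrite big_const_seq iter_addr_0 count_ne /= expr1 expr0 mulr1; ring.
Qed.

Definition weight_sum p m s := \sum_(A <- assemblees m s | lead_singletons p A) weight A.

Lemma weight_sum_small p m s : (m < s)%N -> weight_sum p m s = 0.
Proof.
move=> lt_m_s; rewrite /weight_sum big_seq_cond big1 // => A /andP[+ _].
by rewrite mem_assemblees => /assemblee_le; rewrite leqNgt lt_m_s.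
Qed.

Lemma weight_sum_full m s : weight_sum s m s = (m == s)%:R.
Proof.
have perm_full : perm_eq [seq A <- assemblees m s | lead_singletons s A]
                         (if m == s then [:: singletons s] else [::]).
  apply: uniq_perm; rewrite ?filter_uniq ?undup_uniq //; first by case: eqP.
  move=> A; rewrite mem_filter mem_assemblees; apply/andP/idP => [[A_lead A_ass] | ].
    by have [-> ->] := lead_singletons_full A_ass A_lead; rewrite eqxx mem_seq1.
  case: eqP => // ->; rewrite mem_seq1 => /eqP ->; split; last exact: singletons_assemblee.
  rewrite /lead_singletons take_oversize; first by apply/allP => _ /mapP[x _ ->].
  by rewrite size_map size_rev size_iota.
rewrite /weight_sum -big_filter (perm_big _ perm_full).
case: eqP => _; rewrite ?big_nil // big_seq1 /weight.
by have [-> ->] := highs_lows_singletons s; rewrite mulr1.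
Qed.

Lemma weight_sumS p m s : (p < s)%N ->
  weight_sum p m.+1 s = (a + b + m.-1%:R) * weight_sum p m s + weight_sum p.+1 m.+1 s.
Proof.
move=> lt_p_s; rewrite /weight_sum (bigID (fun A => size (nth [::] A p) == 1%N)) /= addrC.
congr (_ + _); last first.
  rewrite [LHS]big_seq_cond [RHS]big_seq_cond; apply: eq_bigl => A.
  case A_in: (A \in _) => //=; move: A_in; rewrite mem_assemblees => /assemblee_size A_s.
  by rewrite lead_singletonsS ?A_s.
rewrite -big_filter (eq_in_filter (a2 := fun A =>
    lead_singletons p A && (1 < size (nth [::] A p))%N)); last first.
  move=> A; rewrite mem_assemblees => A_ass.
  have: nth [::] A p \in A by rewrite mem_nth ?(assemblee_size A_ass).
  by move/(allP (assemblee_nonempty A_ass)); case: (size _) => [|[]].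
rewrite (perm_big _ (perm_insert_at m lt_p_s)) big_allpairs_dep.
rewrite mulr_sumr -[in RHS]big_filter; apply: eq_big_seq => A.
rewrite mem_filter mem_assemblees => /andP[A_lead A_ass].
rewrite (eq_big_seq (fun v => a ^+ (v == m.+1) * b ^+ (v == last_end A) * weight A)); last first.
  by move=> v; rewrite mem_iota add1n ltnS => v_range /=; rewrite (weight_insert_at A_ass).
have s_gt0 : (0 < s)%N by exact: leq_ltn_trans lt_p_s.
rewrite -mulr_suml sum_insert_factor // (last_end_gt0 A_ass s_gt0) /=.
exact: leq_trans (last_end_le_first_end A_ass) (first_end_le A_ass s_gt0).
Qed.

Lemma weight_sum_closed r k j : (k <= r)%N ->
  weight_sum (r - k) (r.+1 + j) r.+1 =
  'C(j + k, k)%:R * \prod_(r <= i < r + j) (a + b + i%:R).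
Proof.
have prodS j' : \prod_(r <= i < r + j'.+1) (a + b + i%:R) =
               \prod_(r <= i < r + j') (a + b + i%:R) * (a + b + (r + j')%:R).
  by rewrite addnS big_nat_recr //= leq_addr.
elim: k j => [|k IHk] j le_k_r.
  rewrite subn0; elim: j => [|j IHj].
    rewrite addn0 weight_sumS // weight_sum_small // weight_sum_full eqxx.
    by rewrite mulr0 add0r bin0 addn0 big_geq // mulr1.
  rewrite addnS weight_sumS // IHj weight_sum_full gtn_eqF ?ltnS ?leq_addr // addSn /=.
  by rewrite addr0 !bin0 prodS mulrC mulrA.
have r_k : ((r - k.+1).+1 = r - k)%N by rewrite subnSK.
have lt_p_s : (r - k.+1 < r.+1)%N by rewrite ltnS leq_subr.
elim: j => [|j IHj].
  rewrite addn0 (weight_sumS _ lt_p_s) weight_sum_small // r_k -{1}[r.+1]addn0.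
  rewrite (IHk _ (ltnW le_k_r)).
  by rewrite mulr0 add0r !addn0 !binn big_geq.
rewrite addnS (weight_sumS _ lt_p_s) IHj r_k -addnS (IHk _ (ltnW le_k_r)) prodS addSn /=.
by rewrite (addSnnS j k) (addSn j k.+1) binS natrD; ring.
Qed.

End Weights.

Unset Implicit Arguments.
Local Open Scope ring_scope.

Theorem mainTheorem1 (R : fieldType) (n r : nat) (alpha beta : R) :
  (r <= n)%N -> alpha != 0 -> beta != 0 ->
  \sum_(A <- assemblees n.+1 r.+1)
      alpha ^- size (lrs A) * beta ^- size (rls A)
  = 'C(n, r)%:R * \prod_(r <= i < n) (alpha^-1 + beta^-1 + i%:R).
Proof.
move=> le_r_n _ _.
have weight_rev_lows A : A \in assemblees n.+1 r.+1 ->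
    alpha ^- size (lrs A) * beta ^- size (rls A) = weight alpha^-1 beta^-1 (rev_lows A).
  rewrite mem_assemblees => A_ass.
  by rewrite /weight (highs_rev_lows A_ass) (lows_rev_lows A_ass) size_lrs size_rls !exprVn.
rewrite (eq_big_seq _ weight_rev_lows) big_rev_lows.
have := weight_sum_closed alpha^-1 beta^-1 (n - r) (leqnn r).
rewrite subnn subnK // addSn subnKC // => <-.
by apply: eq_bigl => A; rewrite /lead_singletons take0.
Qed.
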